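(* Let $f:2^N\to\mathbb R_{\ge0}$ be monotone submodular, $|N|=n$ with $\sqrt n$ an integer, $1\le k\le n$, and $S^\star\in\arg\max_{|T|\le k}f(T)$. If $\mathbb E_{S\sim\mathcal D_{\sqrt n}}[f(S)]\ge f(S^\star)/4$, then a uniformly random set $S$ of size $k$ satisfies $\mathbb E[f(S)]\ge\min(1/4,\,k/(4\sqrt n))\,f(S^\star)$.
   Context: $\mathcal D_j$ denotes the uniform distribution over subsets of $N$ of size $j$. $f$ monotone: $f(A)\le f(B)$ for $A\subseteq B$; submodular: $f(A\cup\{e\})-f(A)\ge f(B\cup\{e\})-f(B)$ for $A\subseteq B$. *)

From mathcomp Require Import all_boot all_order all_algebra.
Set Implicit Arguments. Unset Strict Implicit. Unset Printing Implicit Defensive.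
Import Order.TTheory GRing.Theory Num.Theory.
Local Open Scope ring_scope.

Definition monotone_setfun (R : realFieldType) (N : finType) (f : {set N} -> R) :=
  forall A B : {set N}, A \subset B -> f A <= f B.

Definition submodular_setfun (R : realFieldType) (N : finType) (f : {set N} -> R) :=
  forall (A B : {set N}) (e : N), A \subset B ->
    f (e |: B) - f B <= f (e |: A) - f A.

(* E_{S ~ D_j}[f S], where D_j is the uniform distribution over subsets of N of
   size j (0 <= j <= |N|, so that the support is nonempty). *)
Definition expect_unif (R : realFieldType) (N : finType) (f : {set N} -> R) (j : nat) : R :=
  (\sum_(S : {set N} | #|S| == j) f S) / ('C(#|N|, j))%:R.

(* Double counting the pairs (S, e) with #|S| = j and e \notin S compares
   consecutive layers of the uniform distributions.  Monotonicity gives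
   E_j <= E_(j+1).  Submodularity bounds the sum of the marginals
   f T - f (T :\ e) over e in T by f T - f set0 <= f T, which gives
   E_(j+1) / (j+1) <= E_j / j.  If k >= m the first chain yields
   E_k >= E_m >= f S* / 4; if k < m the second yields
   E_k >= (k / m) E_m >= k / (4 m) f S*. *)

From mathcomp Require Import all_boot all_order all_algebra ring lra.
Set Implicit Arguments. Unset Strict Implicit. Unset Printing Implicit Defensive.
Import Order.TTheory GRing.Theory Num.Theory.
Local Open Scope ring_scope.

Section UniformLayers.
Variables (R : realFieldType) (N : finType).
Implicit Types (f : {set N} -> R) (S T : {set N}).

Lemma sum_layer_succ_removeE (F : {set N} -> N -> R) j :
  \sum_(T : {set N} | #|T| == j.+1) \sum_(e in T) F (T :\ e) e =
  \sum_(S : {set N} | #|S| == j) \sum_(e in ~: S) F S e.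
Proof.
rewrite (pair_big_dep (fun T : {set N} => #|T| == j.+1) (fun T e => e \in T)
  (fun T e => F (T :\ e) e)) /=.
rewrite (pair_big_dep (fun S : {set N} => #|S| == j) (fun S e => e \in ~: S)
  (fun S e => F S e)) /=.
rewrite (reindex_onto (fun p : {set N} * N => (p.2 |: p.1, p.2))
   (fun p : {set N} * N => (p.1 :\ p.2, p.2))) /=; last first.
  by case=> T e /= /andP[_ eT]; rewrite setD1K.
apply: eq_big => [[S e] /=|[S e] /= /andP[_ /eqP[->]] //].
rewrite in_setC setU11 andbT.
have [eS|eNS] := boolP (e \in S).
  rewrite andbF; apply/negbTE/andP => -[_ /eqP[/setP/(_ e)]].
  by rewrite !inE eqxx eS.
by rewrite setU1K // eqxx cardsU1 eNS.
Qed.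

Lemma sum_marginals_le f : submodular_setfun f ->
  forall T, \sum_(e in T) (f T - f (T :\ e)) <= f T - f set0.
Proof.
move=> subf T; have [n] := ubnP #|T|; elim: n T => // n IH T.
have [->|[x xT]] := set_0Vmem T; first by rewrite big_set0 subrr.
rewrite (cardsD1 x) xT add1n ltnS => /IH IHx.
have marginals_shrink : \sum_(e in T | e != x) (f T - f (T :\ e)) <=
    \sum_(e in T :\ x) (f (T :\ x) - f (T :\ x :\ e)).
  rewrite [X in _ <= X](eq_bigl (fun e => (e \in T) && (e != x))); last first.
    by move=> e; rewrite in_setD1 andbC.
  apply: ler_sum => e /andP[eT nex].
  have := subf (T :\ x :\ e) (T :\ e) e.
  rewrite !setD1K ?in_setD1 ?nex //; apply.
  by rewrite setDSS ?subsetDl.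
rewrite (bigD1 x) //=; move: (le_trans marginals_shrink IHx); lra.
Qed.

Lemma card_mul_le_sum_remove f T j :
  (forall S, 0 <= f S) -> submodular_setfun f -> #|T| = j.+1 ->
  j%:R * f T <= \sum_(e in T) f (T :\ e).
Proof.
move=> f_ge0 subf cardT.
have := sum_marginals_le subf T.
rewrite sumrB sumr_const cardT -[f T *+ _]mulr_natl -natr1.
move: (f_ge0 set0); lra.
Qed.

Definition layer_sum f j := \sum_(S : {set N} | #|S| == j) f S.

Lemma layer_sum_succ_ge f j : monotone_setfun f ->
  (#|N| - j)%:R * layer_sum f j <= j.+1%:R * layer_sum f j.+1.
Proof.
move=> monof; rewrite /layer_sum !mulr_sumr.
have insert_ge S : #|S| == j ->
    (#|N| - j)%:R * f S <= \sum_(e in ~: S) f (e |: S).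
  move=> /eqP cardS; have cardCS : #|~: S| = (#|N| - j)%N.
    by rewrite cardsCs setCK cardS.
  rewrite -cardCS mulr_natl -sumr_const.
  by apply: ler_sum => e _; apply: monof; rewrite subsetUr.
rewrite [X in _ <= X](eq_bigr (fun T => \sum_(e in T) f (e |: (T :\ e)))); last first.
  move=> T /eqP cardT; rewrite mulr_natl -cardT -sumr_const.
  by apply: eq_bigr => e eT; rewrite setD1K.
rewrite (sum_layer_succ_removeE (fun S e => f (e |: S))).
exact: ler_sum.
Qed.

Lemma layer_sum_succ_le f j :
  (forall S, 0 <= f S) -> submodular_setfun f ->
  j%:R * layer_sum f j.+1 <= (#|N| - j)%:R * layer_sum f j.
Proof.
move=> f_ge0 subf; rewrite /layer_sum !mulr_sumr.
rewrite [X in _ <= X](eq_bigr (fun S => \sum_(e in ~: S) f S)); last first.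
  by move=> S /eqP cardS; rewrite sumr_const cardsCs setCK cardS mulr_natl.
rewrite -(sum_layer_succ_removeE (fun S _ => f S)).
by apply: ler_sum => T /eqP; apply: card_mul_le_sum_remove.
Qed.

Lemma expect_unif_succE f j : (j < #|N|)%N ->
  expect_unif f j.+1 =
  j.+1%:R * layer_sum f j.+1 / ((#|N| - j)%:R * 'C(#|N|, j)%:R).
Proof.
move=> ltjN; rewrite /expect_unif -natrM -mul_bin_left natrM.
by rewrite invfM mulrACA mulfV ?mul1r // pnatr_eq0.
Qed.

Lemma expect_unif_le_succ f j : monotone_setfun f -> (j < #|N|)%N ->
  expect_unif f j <= expect_unif f j.+1.
Proof.
move=> monof ltjN; rewrite expect_unif_succE // /expect_unif -/(layer_sum f j).
have c_gt0 : 0 < 'C(#|N|, j)%:R :> R by rewrite ltr0n bin_gt0 ltnW.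
have r_gt0 : 0 < (#|N| - j)%:R :> R by rewrite ltr0n subn_gt0.
rewrite invfM mulrA ler_pM2r ?invr_gt0 // ler_pdivlMr // mulrC.
exact: layer_sum_succ_ge.
Qed.

Lemma expect_unif_succ_div_le f j :
  (forall S, 0 <= f S) -> submodular_setfun f -> (0 < j < #|N|)%N ->
  expect_unif f j.+1 / j.+1%:R <= expect_unif f j / j%:R.
Proof.
move=> f_ge0 subf /andP[j_gt0 ltjN].
rewrite expect_unif_succE // /expect_unif -/(layer_sum f j).
have c_gt0 : 0 < 'C(#|N|, j)%:R :> R by rewrite ltr0n bin_gt0 ltnW.
have r_gt0 : 0 < (#|N| - j)%:R :> R by rewrite ltr0n subn_gt0.
have j_pos : 0 < j%:R :> R by rewrite ltr0n.
set r := (#|N| - j)%:R; set c := 'C(#|N|, j)%:R.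
have -> : j.+1%:R * layer_sum f j.+1 / (r * c) / j.+1%:R =
          j%:R * layer_sum f j.+1 / (r * c * j%:R).
  by field; rewrite !gt_eqF // addr_gt0.
have -> : layer_sum f j / c / j%:R = r * layer_sum f j / (r * c * j%:R).
  by field; rewrite ?gt_eqF.
rewrite ler_pM2r ?invr_gt0 ?mulr_gt0 //.
exact: layer_sum_succ_le.
Qed.

Lemma expect_unif_monotone f i j : monotone_setfun f ->
  (i <= j <= #|N|)%N -> expect_unif f i <= expect_unif f j.
Proof.
move=> monof /andP[leij lejN].
apply: (Order.NatMonotonyTheory.nondecn_inP (D := [pred n | n <= #|N|]%N)).
- by move=> a b _ /[!inE] lebN c /andP[_ ltcb]; apply: leq_trans (ltnW ltcb) lebN.
- by move=> a _ /[!inE] ltaN; apply: expect_unif_le_succ.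
- by rewrite inE (leq_trans leij).
- by rewrite inE.
- by [].
Qed.

Lemma expect_unif_div_antitone f i j :
  (forall S, 0 <= f S) -> submodular_setfun f ->
  (0 < i <= j)%N -> (j <= #|N|)%N ->
  expect_unif f j / j%:R <= expect_unif f i / i%:R.
Proof.
move=> f_ge0 subf /andP[i_gt0 leij] lejN.
apply: (Order.NatMonotonyTheory.nonincn_inP
  (D := [pred n | 0 < n <= #|N|]%N) (f := fun n => expect_unif f n / n%:R)).
- move=> a b /[!inE] /andP[a_gt0 _] /andP[_ lebN] c /andP[ltac ltcb].
  by rewrite inE (leq_trans a_gt0 (ltnW ltac)) (leq_trans (ltnW ltcb) lebN).
- move=> a /[!inE] /andP[a_gt0 _] /andP[_ ltaN].
  by apply: expect_unif_succ_div_le; rewrite ?a_gt0.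
- by rewrite inE (leq_trans i_gt0 leij).
- by rewrite inE i_gt0 (leq_trans leij).
- by [].
Qed.

End UniformLayers.

Theorem lemma23 (R : realFieldType) (N : finType) (f : {set N} -> R)
  (m k : nat) (Sstar : {set N}) :
  (forall S, 0 <= f S) ->
  monotone_setfun f ->
  submodular_setfun f ->
  #|N| = (m * m)%N ->
  (1 <= k <= #|N|)%N ->
  (#|Sstar| <= k)%N ->
  (forall T : {set N}, (#|T| <= k)%N -> f T <= f Sstar) ->
  expect_unif f m >= f Sstar / 4 ->
  expect_unif f k >= Num.min (1 / 4) (k%:R / (4 * m%:R)) * f Sstar.
Proof.
move=> f_ge0 monof subf cardN /andP[k_gt0 lekN] _ _ Em_ge.
have fS_ge0 := f_ge0 Sstar.
have m_gt0 : (0 < m)%N.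
  by move: (leq_trans k_gt0 lekN); rewrite cardN muln_gt0 andbb.
have lemN : (m <= #|N|)%N by rewrite cardN leq_pmulr.
have [lemk|ltkm] := leqP m k.
  have Em_le_Ek : expect_unif f m <= expect_unif f k.
    by apply: (expect_unif_monotone monof); rewrite lemk lekN.
  apply: le_trans Em_le_Ek; apply: le_trans Em_ge.
  rewrite mulrC ler_wpM2l // mul1r.
  by rewrite ge_min lexx.
have : expect_unif f m / m%:R <= expect_unif f k / k%:R.
  by apply: expect_unif_div_antitone; rewrite ?k_gt0 ?(ltnW ltkm).
rewrite ler_pdivlMr ?ltr0n // => Ek_ge.
apply: le_trans Ek_ge; apply: le_trans (_ : k%:R / (4 * m%:R) * f Sstar <= _).
  by rewrite ler_wpM2r // ge_min lexx orbT.
have -> : k%:R / (4 * m%:R) * f Sstar = f Sstar / 4 / m%:R * k%:R.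
  by field; rewrite pnatr_eq0 -lt0n m_gt0.
by rewrite ler_wpM2r // ler_pM2r ?invr_gt0 ?ltr0n.
Qed.
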